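(* Let $B_J\in\mathbb R^{n\times n}$ satisfy $\|B_J\|_1<1$ (strict diagonal dominance by columns), and let $\mathcal B$ be any splitting of $B_J$. Then $\rho(T(\mathcal B))<1$, so the associated iterative scheme converges.
   Context: For $B\in\mathbb R^{n\times n}$, a splitting of $B$ of order $d\ge1$ is an ordered $d$-tuple $\mathcal B=(B_1,\dots,B_d)$ of real $n\times n$ matrices with $B_p\neq O$ for all $p$, $\sum_{p=1}^d B_p=B$, and $B_p\circ B_q=O$ (Hadamard product) for $p\ne q$. The iteration matrix of $\mathcal B$ is the $dn\times dn$ matrix $T(\mathcal B)=(I_{dn}-\mathcal L)^{-1}\mathcal U$, where $\mathcal L,\mathcal U$ are $d\times d$ block matrices with $n\times n$ blocks, $\mathcal L_{ij}=B_j$ if $i>j$ and $O$ otherwise, $\mathcal U_{ij}=B_j$ if $i\le j$ and $O$ otherwise. $\rho$ is spectral radius, $\|\cdot\|_1$ the maximum-column-sum norm. *)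

From HB Require Import structures.
From mathcomp Require Import all_boot all_order all_algebra.
From mathcomp Require Import complex.
From mathcomp Require Import reals.

Set Implicit Arguments.
Unset Strict Implicit.
Unset Printing Implicit Defensive.

Import Order.TTheory GRing.Theory Num.Theory.
Local Open Scope ring_scope.

Definition mx_norm1 (R : realType) (n : nat) (B : 'M[R]_n) : R :=
  \big[Num.max/0]_(j < n) \sum_(i < n) `|B i j|.

Definition hadamard (R : realType) (n : nat) (A B : 'M[R]_n) : 'M[R]_n :=
  \matrix_(i, j) (A i j * B i j).

Definition is_splitting (R : realType) (n d : nat) (B : 'M[R]_n)
    (Bs : 'I_d -> 'M[R]_n) : Prop :=
  [/\ (0 < d)%N,
      (forall p, Bs p != 0),
      \sum_(p < d) Bs p = B &
      (forall p q, p != q -> hadamard (Bs p) (Bs q) = 0)].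

(* Block matrices L and U (d x d blocks of size n x n); the index type is
   \sum_(p < d) n, i.e. dn. *)
Definition split_L (R : realType) (n d : nat) (Bs : 'I_d -> 'M[R]_n)
    : 'M[R]_(\sum_(p < d) n) :=
  mxblock (fun (i j : 'I_d) => if (j < i)%N then Bs j else (0 : 'M[R]_n)).

Definition split_U (R : realType) (n d : nat) (Bs : 'I_d -> 'M[R]_n)
    : 'M[R]_(\sum_(p < d) n) :=
  mxblock (fun (i j : 'I_d) => if (i <= j)%N then Bs j else (0 : 'M[R]_n)).

Definition iter_mx (R : realType) (n d : nat) (Bs : 'I_d -> 'M[R]_n)
    : 'M[R]_(\sum_(p < d) n) :=
  invmx (1%:M - split_L Bs) *m split_U Bs.

Definition spectral_radius_lt1 (R : realType) (m : nat) (A : 'M[R]_m) : Prop :=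
  forall lambda : complex R,
    eigenvalue (map_mx (fun x : R => (x%:C)%C) A) lambda -> `|lambda| < 1.

(* Let v T = lam v with |lam| >= 1 and put w := v (I - L)^-1, so that
   w U + lam w L = lam w.  Reading this equation block by block, every entry of
   w is a combination of entries of w with coefficients c B_q(a,b), |c| <= |lam|.
   Summing the moduli over the d blocks of a position a gives a nonnegative
   vector sv with sv <= sv |B_J| (because the B_q have disjoint supports,
   sum_q |B_q(a,b)| = |B_J(a,b)|), and ||B_J||_1 < 1 then forces sv = 0 by
   looking at its largest entry.  The same argument with lam = 1 shows that
   I - L is invertible. *)
From HB Require Import structures.
From mathcomp Require Import all_boot all_order all_algebra.
From mathcomp Require Import complex.
From mathcomp Require Import reals.
From mathcomp Require Import lra.
Import Order.TTheory GRing.Theory Num.Theory.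
Import ComplexField.Normc.
Local Open Scope ring_scope.

Section BlockIndices.
Context {d n : nat}.

Definition block_idx (s : 'I_(\sum_(p < d) n)) : 'I_d :=
  @tagnat.sig1 d (fun=> n) s.
Definition block_ofs (s : 'I_(\sum_(p < d) n)) : 'I_n :=
  @tagnat.sig2 d (fun=> n) s.
Definition block_rank (p : 'I_d) (a : 'I_n) : 'I_(\sum_(p < d) n) :=
  @tagnat.Rank d (fun=> n) p a.

Lemma block_idx_rank p a : block_idx (block_rank p a) = p.
Proof. exact: tagnat.Rank1K. Qed.

Lemma block_ofs_rank p a : block_ofs (block_rank p a) = a.
Proof. by apply/val_inj; rewrite /block_ofs /block_rank tagnat.Rank2K. Qed.

Lemma block_rankK s : block_rank (block_idx s) (block_ofs s) = s.
Proof. exact: tagnat.sig2K. Qed.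

Lemma big_block_rank (V : nmodType) (F : 'I_(\sum_(p < d) n) -> V) :
  \sum_s F s = \sum_(p < d) \sum_(a < n) F (block_rank p a).
Proof.
rewrite (sig_big_dep xpredT (fun=> xpredT) (fun p a => F (block_rank p a))) /=.
rewrite (reindex (@tagnat.rank d (fun=> n))) /=; last exact: tagnat.rank_bij_on.
by apply: eq_bigr => -[p a] _; rewrite tagnat.rankE.
Qed.

End BlockIndices.

Section ComplexModulus.
Context {R : realType}.

Lemma normc_ge0 (x : complex R) : 0 <= normc x.
Proof. exact: (@normr_ge0 _ (Rcomplex R)). Qed.

Lemma normc_gt0 {x : complex R} : x != 0 -> 0 < normc x.
Proof. by move=> x_neq0; have := @normr_gt0 _ (Rcomplex R) x; rewrite x_neq0. Qed.

Lemma normc_sum (I : Type) (r : seq I) (P : pred I) (F : I -> complex R) :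
  normc (\sum_(i <- r | P i) F i) <= \sum_(i <- r | P i) normc (F i).
Proof. exact: (@ler_norm_sum _ (Rcomplex R)). Qed.

Lemma normc_real (x : R) : normc (x%:C)%C = `|x|.
Proof. by rewrite /= expr0n /= addr0 sqrtr_sqr. Qed.

Lemma normr_ltc1 (x : complex R) : (`|x| < 1) = (normc x < 1).
Proof. by case: x => a b; rewrite normc_def /= -[1]/((1%:C)%C) ltcR. Qed.

End ComplexModulus.

Lemma splitting_sum_normr {R : realType} {n d : nat} {B : 'M[R]_n}
    {Bs : 'I_d -> 'M[R]_n} :
  is_splitting B Bs -> forall a b, \sum_q `|Bs q a b| = `|B a b|.
Proof.
case=> _ _ sumBs disjBs a b.
have -> : B a b = \sum_q Bs q a b by rewrite -sumBs summxE.
have [q0 nz_q0 | all0] := pickP (fun q => Bs q a b != 0); last first.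
  by rewrite !big1 ?normr0 // => q _; move/negbFE/eqP: (all0 q) ->; rewrite ?normr0.
have others0 q : q != q0 -> Bs q a b = 0.
  move=> /disjBs/matrixP/(_ a b)/eqP; rewrite !mxE mulf_eq0 => /orP[/eqP //|].
  by rewrite (negbTE nz_q0).
rewrite (bigD1 q0) // [in RHS](bigD1 q0) //= !big1 ?addr0 // => q /others0 ->.
exact: normr0.
Qed.

Lemma mx_norm1_lt1_subinvariant_eq0 {R : realType} {n : nat} {B : 'M[R]_n}
    {sv : 'I_n -> R} :
  mx_norm1 B < 1 -> (forall a, 0 <= sv a) ->
  (forall b, sv b <= \sum_a sv a * `|B a b|) -> forall a, sv a = 0.
Proof.
move=> normB_lt1 sv_ge0 sv_sub.
pose S := \big[Num.max/0]_a sv a.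
have svS a : sv a <= S by exact: le_bigmax.
have S_sub : S <= S * mx_norm1 B.
  apply: bigmax_le => [|b _]; first by rewrite mulr_ge0 ?bigmax_ge_id.
  apply: le_trans (sv_sub b) _.
  apply: le_trans (_ : \sum_a S * `|B a b| <= _).
    by apply: ler_sum => a _; apply: ler_wpM2r; [exact: normr_ge0 | exact: svS].
  rewrite -mulr_sumr; apply: ler_wpM2l; first exact: bigmax_ge_id.
  exact: (le_bigmax _ (fun j => \sum_i `|B i j|)).
have S_le0 : S <= 0 by have : 0 <= S := bigmax_ge_id _ _ _ _; nra.
by move=> a; apply/eqP; rewrite eq_le sv_ge0 andbT (le_trans (svS a)).
Qed.

Section SplittingSystem.
Context {R : realType} {n d : nat} {BJ : 'M[R]_n} {Bs : 'I_d -> 'M[R]_n}.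
Hypotheses (normBJ_lt1 : mx_norm1 BJ < 1) (splitBs : is_splitting BJ Bs).

Lemma splitting_system_eq0 (w : 'rV[complex R]_(\sum_(p < d) n))
    (lam : complex R) (c : 'I_d -> 'I_d -> complex R) :
  (forall p q, normc (c p q) <= normc lam) -> lam != 0 ->
  (forall t, lam * w 0 t = \sum_s w 0 s *
     (c (block_idx s) (block_idx t) *
      (Bs (block_idx t) (block_ofs s) (block_ofs t))%:C)%C) ->
  w = 0.
Proof.
move=> c_le lam_neq0 w_eq.
pose W p a := w 0 (block_rank p a).
pose sv a := \sum_(p < d) normc (W p a).
have lam_gt0 := normc_gt0 lam_neq0.
have W_sub q b : normc (W q b) <= \sum_a sv a * `|Bs q a b|.
  rewrite -(ler_pM2l lam_gt0) -normcM /W w_eq.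
  apply: le_trans; first exact: normc_sum.
  rewrite big_block_rank /sv mulr_sumr.
  under [leRHS]eq_bigr do rewrite mulr_suml mulr_sumr.
  rewrite [leRHS]exchange_big /=; apply: ler_sum => p _; apply: ler_sum => a _.
  rewrite !block_idx_rank !block_ofs_rank !normcM normc_real mulrCA.
  by apply: ler_wpM2r; [rewrite mulr_ge0 ?normc_ge0 | exact: c_le].
have sv_sub b : sv b <= \sum_a sv a * `|BJ a b|.
  apply: le_trans (ler_sum _ (fun q _ => W_sub q b)) _.
  rewrite exchange_big /=; apply: ler_sum => a _.
  by rewrite -mulr_sumr (splitting_sum_normr splitBs).
have sv_ge0 a : 0 <= sv a by apply: sumr_ge0 => p _; exact: normc_ge0.
have sv0 := mx_norm1_lt1_subinvariant_eq0 normBJ_lt1 sv_ge0 sv_sub.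
apply/rowP => t; rewrite mxE -[t]block_rankK; apply: eq0_normc.
have /eqP := sv0 (block_ofs t).
rewrite psumr_eq0 => [/allP/(_ (block_idx t) (mem_index_enum _))/eqP //|p _].
exact: normc_ge0.
Qed.

End SplittingSystem.

Section IterationMatrix.
Context {R : realType} {n d : nat} {Bs : 'I_d -> 'M[R]_n}.

Let Lc := map_mx (real_complex R) (split_L Bs).
Let Uc := map_mx (real_complex R) (split_U Bs).

Lemma map_split_LE s t : Lc s t =
  if (block_idx t < block_idx s)%N
  then (Bs (block_idx t) (block_ofs s) (block_ofs t))%:C%C else 0.
Proof. by rewrite /Lc /split_L /mxblock !mxE; case: ifP; rewrite ?mxE ?rmorph0. Qed.

Lemma map_split_UE s t : Uc s t =
  if (block_idx t < block_idx s)%N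
  then 0 else (Bs (block_idx t) (block_ofs s) (block_ofs t))%:C%C.
Proof.
by rewrite /Uc /split_U /mxblock !mxE leqNgt if_neg; case: ifP; rewrite ?mxE ?rmorph0.
Qed.

Lemma map_iter_mx :
  map_mx (fun x : R => (x%:C)%C) (iter_mx Bs) = invmx (1%:M - Lc) *m Uc.
Proof. by rewrite [LHS](map_mxM (real_complex R)) map_invmx map_mxB map_mx1. Qed.

Context {BJ : 'M[R]_n}.
Hypotheses (normBJ_lt1 : mx_norm1 BJ < 1) (splitBs : is_splitting BJ Bs).

Lemma unitmx_sub_split_L : 1%:M - Lc \in unitmx.
Proof.
rewrite -row_free_unit -kermx_eq0; apply/eqP/row_matrixP => i; rewrite row0.
set u := row i _.
have u_ker : u *m (1%:M - Lc) = 0 by apply/sub_kermxP; exact: row_sub.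
have u_fix : u = u *m Lc.
  by apply/eqP; rewrite -subr_eq0 -{1}(mulmx1 u) -mulmxBr u_ker.
apply: (splitting_system_eq0 normBJ_lt1 splitBs u 1
  (fun p q => if (q < p)%N then 1 else 0)) => [p q||t].
- by case: ifP; rewrite ?normc1 ?normc0.
- exact: oner_neq0.
- rewrite mul1r {1}u_fix mxE; apply: eq_bigr => s _.
  by rewrite map_split_LE; case: ifP; rewrite ?mul1r ?mul0r.
Qed.

Lemma iter_mx_eigen_normc_lt1 (lam : complex R) (v : 'rV_(\sum_(p < d) n)) :
  v != 0 -> v *m (invmx (1%:M - Lc) *m Uc) = lam *: v -> normc lam < 1.
Proof.
move=> v_neq0 v_eigen; rewrite ltNge; apply/negP => lam_ge1.
have lam_neq0 : lam != 0 by apply: contraTneq lam_ge1 => ->; rewrite normc0 ler10.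
pose w := v *m invmx (1%:M - Lc).
have v_w : v = w *m (1%:M - Lc) by rewrite /w mulmxKV ?unitmx_sub_split_L.
have w_eq : w *m Uc + lam *: (w *m Lc) = lam *: w.
  have : w *m Uc = lam *: v by rewrite /w -mulmxA v_eigen.
  by rewrite v_w mulmxBr mulmx1 scalerBr => ->; rewrite subrK.
have w0 : w = 0.
  apply: (splitting_system_eq0 normBJ_lt1 splitBs w lam
    (fun p q => if (q < p)%N then lam else 1)) => [p q||t] //.
  - by case: ifP; rewrite ?normc1.
  - move/matrixP: w_eq => /(_ 0 t); rewrite !mxE => <-.
    rewrite mulr_sumr -big_split /=; apply: eq_bigr => s _.
    rewrite map_split_LE map_split_UE.
    by case: ifP; rewrite ?mulr0 ?addr0 ?add0r ?mul1r // mulrCA.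
by move: v_neq0; rewrite v_w w0 mul0mx eqxx.
Qed.

End IterationMatrix.

Theorem proposition4p2 (R : realType) (n d : nat) (BJ : 'M[R]_n)
    (Bs : 'I_d -> 'M[R]_n) :
  mx_norm1 BJ < 1 -> is_splitting BJ Bs -> spectral_radius_lt1 (iter_mx Bs).
Proof.
move=> normBJ_lt1 splitBs lam /eigenvalueP[v v_eigen v_neq0].
rewrite normr_ltc1 (iter_mx_eigen_normc_lt1 normBJ_lt1 splitBs lam v v_neq0) //.
by rewrite -map_iter_mx; exact: v_eigen.
Qed.
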